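(* Let $(p_0,\dots,p_{n-1})$ be a closed discrete curve and let $\kappa\in\mathbb{R}\setminus\{0\}$. The following are equivalent: (1) the curve is an equilibrium of $L+\kappa\mathrm{Vol}$, i.e. $\nabla_{p_k}L+\kappa\nabla_{p_k}\mathrm{Vol}=0$ for all $k$; (2) there exist $l_0>0$ and $\theta_0\in(-\pi,\pi)$ such that $l_k=l_0$ and $\theta_k=\theta_0$ for all $k$, and $\kappa l_0=2\tan(\theta_0/2)$.
   Context: A closed discrete curve is an $n$-tuple $(p_0,\dots,p_{n-1})$ of points of $\mathbb{R}^2$ ($n\ge3$), indices modulo $n$, with $l_k:=|p_{k+1}-p_k|\ne0$ for all $k$. $R_\varphi$ denotes rotation of $\mathbb{R}^2$ by $\varphi$. Fix $R\in\{R_{\pi/2},R_{-\pi/2}\}$ and set $\sigma=+1$ if $R=R_{\pi/2}$, $\sigma=-1$ if $R=R_{-\pi/2}$. Edge normal $\nu_k:=R((p_{k+1}-p_k)/l_k)$. The signed angle $\theta_k\in(-\pi,\pi]$ at vertex $p_k$ is defined by $\nu_k=R_{\sigma\theta_k}\nu_{k-1}$. Length $L=\sum_k l_k$, area $\mathrm{Vol}=\frac12\sum_k\langle p_k,\nu_k\rangle l_k$, both functions on $(\mathbb{R}^2)^n$; $\nabla_{p_k}$ is the gradient with respect to $p_k$. *)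

From Stdlib Require Import Reals Lra Arith.
From Coquelicot Require Import Coquelicot.
Open Scope R_scope.

Definition pt := (R * R)%type.
Definition padd (a b : pt) : pt := (fst a + fst b, snd a + snd b).
Definition psub (a b : pt) : pt := (fst a - fst b, snd a - snd b).
Definition pscale (c : R) (a : pt) : pt := (c * fst a, c * snd a).
Definition pdot (a b : pt) : R := fst a * fst b + snd a * snd b.
Definition pnorm (a : pt) : R := sqrt (fst a ^ 2 + snd a ^ 2).

Definition rot (phi : R) (a : pt) : pt :=
  (cos phi * fst a - sin phi * snd a, sin phi * fst a + cos phi * snd a).

Fixpoint fsum (n : nat) (f : nat -> R) : R :=
  match n with O => 0 | S m => fsum m f + f m end.

(* A configuration (p_0,...,p_{n-1}) is a function P : nat -> pt of which only
   the values on 0..n-1 are used; indices are taken modulo n. *)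
Definition pidx (n : nat) (P : nat -> pt) (k : nat) : pt := P (k mod n)%nat.

Definition edge_len (n : nat) (P : nat -> pt) (k : nat) : R :=
  pnorm (psub (pidx n P (k + 1)) (pidx n P k)).

Definition closed_curve (n : nat) (P : nat -> pt) : Prop :=
  (3 <= n)%nat /\ forall k, (k < n)%nat -> edge_len n P k <> 0.

(* sigma = +1 for R = R_{pi/2}, sigma = -1 for R = R_{-pi/2};
   edge normal nu_k = R((p_{k+1}-p_k)/l_k) with R = R_{sigma pi/2} *)
Definition normal (sigma : R) (n : nat) (P : nat -> pt) (k : nat) : pt :=
  rot (sigma * (PI / 2))
      (pscale (/ edge_len n P k) (psub (pidx n P (k + 1)) (pidx n P k))).

Definition is_signed_angle (sigma : R) (n : nat) (P : nat -> pt) (k : nat)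
  (theta : R) : Prop :=
  - PI < theta <= PI /\
  normal sigma n P (k mod n)%nat
  = rot (sigma * theta) (normal sigma n P ((k + n - 1) mod n)%nat).

Definition Length (n : nat) (P : nat -> pt) : R :=
  fsum n (fun k => edge_len n P k).

Definition Vol (sigma : R) (n : nat) (P : nat -> pt) : R :=
  / 2 * fsum n (fun k => pdot (pidx n P k) (normal sigma n P k) * edge_len n P k).

Definition upd (P : nat -> pt) (k : nat) (w : pt) : nat -> pt :=
  fun j => if Nat.eqb j k then w else P j.

Definition grad_at (F : (nat -> pt) -> R) (P : nat -> pt) (k : nat) : pt :=
  (Derive (fun t => F (upd P k (padd (P k) (t, 0)))) 0,
   Derive (fun t => F (upd P k (padd (P k) (0, t)))) 0).

(* Write e_j = p_{j+1} - p_j = l_j T_j with T_j the unit tangent and J the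
   quarter rotation R, so that nu_j = J T_j.  Both L and Vol are sums over the
   edges of a function of the two endpoints, so moving p_k only affects the
   edges k-1 and k; computing the two directional derivatives gives
     grad_{p_k} L = T_{k-1} - T_k,   grad_{p_k} Vol = (J e_{k-1} + J e_k) / 2,
   hence the equilibrium condition at p_k reads
     T_{k-1} - T_k + kappa/2 J (l_{k-1} T_{k-1} + l_k T_k) = 0.      (balance)
   Two planar facts then finish the proof:
   - between unit vectors, (balance) forces l_{k-1} = l_k, so all edges have a
     common length l0;
   - for equal lengths, (balance) says T_k is the Cayley transform of T_{k-1}:
     u - w + tan(theta/2) J (u + w) = 0 iff w = R_{sigma theta} u, and since
     nu = J T this is the signed-angle relation with theta = 2 atan (kappa l0/2). *)

From Stdlib Require Import Reals Lra Lia.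
From Coquelicot Require Import Coquelicot.
Open Scope R_scope.

Lemma fsum_ext m f g :
  (forall j, (j < m)%nat -> f j = g j) -> fsum m f = fsum m g.
Proof.
  induction m as [|m IH]; intros H; simpl; [reflexivity|].
  rewrite IH, H; auto with arith.
Qed.

Lemma fsum_plus m f g : fsum m (fun j => f j + g j) = fsum m f + fsum m g.
Proof. induction m as [|m IH]; simpl; [ring|]. rewrite IH; ring. Qed.

Lemma fsum_delta m a c :
  (a < m)%nat -> fsum m (fun j => if Nat.eqb j a then c else 0) = c.
Proof.
  induction m as [|m IH]; intros Ha; [lia|]. simpl.
  destruct (Nat.eqb_spec m a) as [->|Hma].
  - rewrite (fsum_ext _ _ (fun _ => 0)).
    + assert (Z : forall i, fsum i (fun _ => 0) = 0)
        by (intros i; induction i as [|i IHi]; simpl; [|rewrite IHi]; ring).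
      rewrite Z; ring.
    + intros j Hj. destruct (Nat.eqb_spec j a); [lia|reflexivity].
  - rewrite IH; [ring|lia].
Qed.

Lemma is_derive_fsum m (F : nat -> R -> R) (g : nat -> R) x :
  (forall j, (j < m)%nat -> is_derive (F j) x (g j)) ->
  is_derive (fun t => fsum m (fun j => F j t)) x (fsum m g).
Proof.
  induction m as [|m IH]; intros H; simpl.
  - apply (is_derive_const (K:=R_AbsRing) (V:=R_NormedModule)).
  - apply (is_derive_plus (fun t => fsum m (fun j => F j t)) (F m)).
    + apply IH; intros; apply H; lia.
    + apply H; lia.
Qed.

Definition prev (n k : nat) : nat := ((k + n - 1) mod n)%nat.

Lemma prev_lt n k : (0 < n)%nat -> (prev n k < n)%nat.
Proof. intros. apply Nat.mod_upper_bound. lia. Qed.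

Lemma prev_spec n k : (k < n)%nat ->
  prev n k = if Nat.eqb k 0 then (n - 1)%nat else (k - 1)%nat.
Proof.
  intros Hk. unfold prev. destruct (Nat.eqb_spec k 0) as [->|Hk0].
  - apply Nat.mod_small. lia.
  - replace (k + n - 1)%nat with ((k - 1) + 1 * n)%nat by lia.
    rewrite Nat.Div0.mod_add. apply Nat.mod_small. lia.
Qed.

Lemma prev_S n j : (S j < n)%nat -> prev n (S j) = j.
Proof. intros Hj. rewrite prev_spec by exact Hj. simpl. lia. Qed.

Lemma prev_neq n k : (2 <= n)%nat -> (k < n)%nat -> prev n k <> k.
Proof. intros Hn Hk. rewrite prev_spec by exact Hk. destruct (Nat.eqb_spec k 0); lia. Qed.

Lemma succ_eqb_prev n j k : (j < n)%nat -> (k < n)%nat ->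
  Nat.eqb ((j + 1) mod n) k = Nat.eqb j (prev n k).
Proof.
  intros Hj Hk. rewrite prev_spec by exact Hk.
  assert (Hsucc : ((j + 1) mod n = if Nat.eqb (j + 1) n then 0 else j + 1)%nat).
  { destruct (Nat.eqb_spec (j + 1) n) as [->|Hjn].
    - apply Nat.Div0.mod_same.
    - apply Nat.mod_small. lia. }
  rewrite Hsucc.
  destruct (Nat.eqb_spec (j + 1) n), (Nat.eqb_spec k 0);
    repeat match goal with |- context [Nat.eqb ?a ?b] => destruct (Nat.eqb_spec a b) end;
    reflexivity || lia.
Qed.

Lemma rot_rot a b x : rot a (rot b x) = rot (a + b) x.
Proof.
  destruct x as [x1 x2]. unfold rot; simpl.
  rewrite cos_plus, sin_plus. f_equal; ring.
Qed.

Lemma rot_0 x : rot 0 x = x.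
Proof. destruct x as [x1 x2]. unfold rot; simpl. rewrite cos_0, sin_0. f_equal; ring. Qed.

Lemma rot_inj a x y : rot a x = rot a y -> x = y.
Proof.
  intros E. rewrite <- (rot_0 x), <- (rot_0 y).
  replace 0 with (- a + a) by ring. rewrite <- !rot_rot, E. reflexivity.
Qed.

Lemma rot_quarter sigma x1 x2 : sigma = 1 \/ sigma = -1 ->
  rot (sigma * (PI / 2)) (x1, x2) = (- sigma * x2, sigma * x1).
Proof.
  intros [-> | ->]; unfold rot; simpl.
  - rewrite Rmult_1_l, cos_PI2, sin_PI2. f_equal; ring.
  - replace (-1 * (PI / 2)) with (- (PI / 2)) by ring.
    rewrite cos_neg, sin_neg, cos_PI2, sin_PI2. f_equal; ring.
Qed.

Lemma rot_oriented sigma theta x1 x2 : sigma = 1 \/ sigma = -1 ->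
  rot (sigma * theta) (x1, x2)
  = (cos theta * x1 - sigma * sin theta * x2, sigma * sin theta * x1 + cos theta * x2).
Proof.
  intros [-> | ->]; unfold rot; simpl.
  - rewrite Rmult_1_l. f_equal; ring.
  - replace (-1 * theta) with (- theta) by ring.
    rewrite cos_neg, sin_neg. f_equal; ring.
Qed.

Lemma half_angle h : - PI / 2 < h < PI / 2 ->
  cos (2 * h) = (1 - tan h ^ 2) / (1 + tan h ^ 2) /\
  sin (2 * h) = 2 * tan h / (1 + tan h ^ 2).
Proof.
  intros Hh. assert (Hc : 0 < cos h) by (apply cos_gt_0; lra).
  pose proof (sin2_cos2 h) as E. unfold Rsqr in E.
  rewrite cos_2a, sin_2a. unfold tan.
  assert (D : 1 + (sin h / cos h) ^ 2 = / cos h ^ 2)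
    by (field_simplify; [rewrite <- E; field|lra..]; lra).
  rewrite D. split; field_simplify; lra.
Qed.

Definition edge_vec (n : nat) (P : nat -> pt) (j : nat) : pt :=
  psub (pidx n P (j + 1)) (pidx n P j).

Definition tangent (n : nat) (P : nat -> pt) (j : nat) : pt :=
  pscale (/ edge_len n P j) (edge_vec n P j).

Lemma edge_len_pos n P j : closed_curve n P -> (j < n)%nat -> 0 < edge_len n P j.
Proof.
  intros [_ Hnz] Hj. pose proof (Hnz j Hj) as H.
  pose proof (sqrt_pos (fst (edge_vec n P j) ^ 2 + snd (edge_vec n P j) ^ 2)).
  unfold edge_len, edge_vec, pnorm in *. lra.
Qed.

Lemma edge_vec_tangent n P j :
  edge_len n P j <> 0 -> edge_vec n P j = pscale (edge_len n P j) (tangent n P j).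
Proof.
  intros H. unfold tangent. destruct (edge_vec n P j) as [x y].
  unfold pscale; simpl. f_equal; field; exact H.
Qed.

Lemma tangent_unit n P j : closed_curve n P -> (j < n)%nat ->
  pdot (tangent n P j) (tangent n P j) = 1.
Proof.
  intros Hc Hj. pose proof (edge_len_pos n P j Hc Hj) as Hl.
  unfold tangent, edge_len, pnorm, edge_vec in *.
  destruct (psub (pidx n P (j + 1)) (pidx n P j)) as [x y]. cbn [fst snd] in *.
  assert (E : sqrt (x ^ 2 + y ^ 2) * sqrt (x ^ 2 + y ^ 2) = x ^ 2 + y ^ 2)
    by (apply sqrt_sqrt; nra).
  unfold pdot, pscale; cbn [fst snd].
  transitivity ((x ^ 2 + y ^ 2) / (sqrt (x ^ 2 + y ^ 2) * sqrt (x ^ 2 + y ^ 2)));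
    [field; lra|].
  rewrite E. field. nra.
Qed.

Lemma pidx_prev_succ n P k : (k < n)%nat -> pidx n P (prev n k + 1) = pidx n P k.
Proof.
  intros Hk. unfold pidx. rewrite (Nat.mod_small k) by exact Hk. f_equal.
  apply Nat.eqb_eq. rewrite succ_eqb_prev; [apply Nat.eqb_refl | apply prev_lt; lia | exact Hk].
Qed.

Definition edge_sum (n : nat) (f : pt -> pt -> R) (Q : nat -> pt) : R :=
  fsum n (fun j => f (pidx n Q j) (pidx n Q (j + 1))).

Definition move (P : nat -> pt) (k : nat) (v : pt) (t : R) : nat -> pt :=
  upd P k (padd (P k) (pscale t v)).

Lemma pidx_move n P k v t i :
  pidx n (move P k v t) i
  = if Nat.eqb (i mod n) k then padd (P k) (pscale t v) else pidx n P i.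
Proof. reflexivity. Qed.

(* Only the two edges at p_k feel the motion of p_k (here n >= 2 makes
   them distinct and keeps every edge from having both ends at p_k). *)
Lemma edge_sum_derive n f P k v D1 D2 :
  (2 <= n)%nat -> (k < n)%nat ->
  is_derive (fun t => f (padd (P k) (pscale t v)) (pidx n P (k + 1))) 0 D1 ->
  is_derive (fun t => f (pidx n P (prev n k)) (padd (P k) (pscale t v))) 0 D2 ->
  is_derive (fun t => edge_sum n f (move P k v t)) 0 (D1 + D2).
Proof.
  intros Hn Hk H1 H2.
  pose proof (prev_neq n k Hn Hk) as Hprev.
  set (g j := (if Nat.eqb j k then D1 else 0) + (if Nat.eqb j (prev n k) then D2 else 0)).
  replace (D1 + D2) with (fsum n g).
  2:{ unfold g. rewrite fsum_plus, !fsum_delta; [ring | apply prev_lt; lia | exact Hk]. }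
  apply is_derive_fsum. intros j Hj.
  assert (Hterm : forall t,
    f (if Nat.eqb j k then padd (P k) (pscale t v) else pidx n P j)
      (if Nat.eqb j (prev n k) then padd (P k) (pscale t v) else pidx n P (j + 1))
    = f (pidx n (move P k v t) j) (pidx n (move P k v t) (j + 1))).
  { intros t. rewrite !pidx_move, (Nat.mod_small j), succ_eqb_prev; auto. }
  apply (is_derive_ext _ _ _ _ Hterm). unfold g.
  destruct (Nat.eqb_spec j k) as [Hjk|Hjk], (Nat.eqb_spec j (prev n k)) as [Hjp|Hjp].
  - congruence.
  - subst j. rewrite Rplus_0_r. exact H1.
  - subst j. rewrite Rplus_0_l. exact H2.
  - rewrite Rplus_0_r. apply (is_derive_const (K:=R_AbsRing) (V:=R_NormedModule)).
Qed.

Lemma grad_at_directional F P k g :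
  (forall v, is_derive (fun t => F (move P k v t)) 0 (pdot g v)) ->
  grad_at F P k = g.
Proof.
  intros H. transitivity (pdot g (1, 0), pdot g (0, 1)).
  - unfold grad_at. f_equal; apply is_derive_unique.
    + eapply is_derive_ext; [| apply H].
      intros t. unfold move, pscale; simpl. do 4 f_equal; ring.
    + eapply is_derive_ext; [| apply H].
      intros t. unfold move, pscale; simpl. do 4 f_equal; ring.
  - destruct g as [g1 g2]. unfold pdot; simpl. f_equal; ring.
Qed.

Lemma is_derive_pnorm d v : pnorm d <> 0 ->
  is_derive (fun t => pnorm (padd d (pscale t v))) 0 (pdot d v / pnorm d).
Proof.
  destruct d as [d1 d2], v as [v1 v2]. unfold pnorm, pdot, padd, pscale; cbn [fst snd].
  intros Hd.
  assert (Hpos : 0 < d1 ^ 2 + d2 ^ 2).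
  { destruct (Rle_lt_or_eq_dec 0 (d1 ^ 2 + d2 ^ 2)) as [H|H]; [nra | exact H |].
    rewrite <- H, sqrt_0 in Hd. lra. }
  auto_derive.
  - replace (d1 + 0 * v1) with d1 by ring. replace (d2 + 0 * v2) with d2 by ring. nra.
  - replace (d1 + 0 * v1) with d1 by ring. replace (d2 + 0 * v2) with d2 by ring.
    replace (d1 * (d1 * 1) + d2 * (d2 * 1)) with (d1 ^ 2 + d2 ^ 2) by ring.
    field. exact Hd.
Qed.

(* The gradient of the length at p_k is T_{k-1} - T_k; L is the edge sum of
   |b - a|, which is differentiable since no edge is degenerate. *)
Lemma grad_Length n P k : closed_curve n P -> (k < n)%nat ->
  grad_at (Length n) P k = psub (tangent n P (prev n k)) (tangent n P k).
Proof.
  intros Hc Hk. assert (Hn : (2 <= n)%nat) by (destruct Hc; lia).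
  assert (Hl : forall j, (j < n)%nat -> edge_len n P j <> 0)
    by (intros j Hj; destruct Hc as [_ Hnz]; exact (Hnz j Hj)).
  apply grad_at_directional. intros v.
  replace (pdot (psub (tangent n P (prev n k)) (tangent n P k)) v)
    with (pdot (edge_vec n P k) (pscale (-1) v) / edge_len n P k
          + pdot (edge_vec n P (prev n k)) v / edge_len n P (prev n k)).
  2:{ unfold tangent. pose proof (Hl k Hk). pose proof (Hl (prev n k) (prev_lt n k ltac:(lia))).
      destruct (edge_vec n P k), (edge_vec n P (prev n k)), v.
      unfold pdot, psub, pscale; simpl. field. auto. }
  apply (edge_sum_derive n (fun a b => pnorm (psub b a))); [exact Hn | exact Hk | |].
  - eapply is_derive_ext; [| apply is_derive_pnorm, Hl, Hk].
    intros t. unfold edge_vec, pidx. rewrite (Nat.mod_small k) by exact Hk.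
    f_equal. unfold psub, padd, pscale; simpl. f_equal; ring.
  - eapply is_derive_ext; [| apply is_derive_pnorm, Hl, prev_lt; lia].
    intros t. unfold edge_vec. rewrite pidx_prev_succ by exact Hk. unfold pidx.
    rewrite (Nat.mod_small k) by exact Hk.
    f_equal. unfold psub, padd, pscale; simpl. f_equal; ring.
Qed.

(* Scaling the unit normal back by the edge length; a degenerate edge
   contributes zero on both sides. *)
Lemma normal_times_length phi p d :
  pdot p (rot phi (pscale (/ pnorm d) d)) * pnorm d = pdot p (rot phi d).
Proof.
  destruct p as [p1 p2], d as [d1 d2].
  unfold pnorm, pdot, rot, pscale; cbn [fst snd].
  destruct (Req_dec (sqrt (d1 ^ 2 + d2 ^ 2)) 0) as [E|E].
  - apply sqrt_eq_0 in E; [|nra].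
    assert (d1 = 0) by nra. assert (d2 = 0) by nra. subst. ring.
  - field. exact E.
Qed.

Lemma Vol_edge_sum sigma n Q :
  Vol sigma n Q
  = / 2 * edge_sum n (fun a b => pdot a (rot (sigma * (PI / 2)) (psub b a))) Q.
Proof.
  unfold Vol, edge_sum. f_equal. apply fsum_ext. intros j _.
  apply normal_times_length.
Qed.

Lemma is_derive_area_start phi a b v :
  is_derive (fun t => pdot (padd a (pscale t v)) (rot phi (psub b (padd a (pscale t v))))) 0
    (pdot v (rot phi (psub b a)) - pdot a (rot phi v)).
Proof.
  destruct a as [a1 a2], b as [b1 b2], v as [v1 v2].
  unfold pdot, rot, psub, padd, pscale; cbn [fst snd].
  auto_derive; [exact I | ring].
Qed.

Lemma is_derive_area_end phi a b v :
  is_derive (fun t => pdot a (rot phi (psub (padd b (pscale t v)) a))) 0 (pdot a (rot phi v)).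
Proof.
  destruct a as [a1 a2], b as [b1 b2], v as [v1 v2].
  unfold pdot, rot, psub, padd, pscale; cbn [fst snd].
  auto_derive; [exact I | ring].
Qed.

Lemma grad_Vol sigma n P k : sigma = 1 \/ sigma = -1 -> (2 <= n)%nat -> (k < n)%nat ->
  grad_at (Vol sigma n) P k
  = pscale (/ 2) (padd (rot (sigma * (PI / 2)) (edge_vec n P (prev n k)))
                       (rot (sigma * (PI / 2)) (edge_vec n P k))).
Proof.
  intros Hs Hn Hk. set (q := sigma * (PI / 2)).
  apply grad_at_directional. intros v.
  eapply is_derive_ext; [intros t; symmetry; apply Vol_edge_sum|].
  (* the contributions of the edges k and k-1, collected by skew-adjointness of J *)
  replace (pdot _ v) with (/ 2 * ((pdot v (rot q (edge_vec n P k)) - pdot (P k) (rot q v))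
                                  + pdot (pidx n P (prev n k)) (rot q v))).
  - apply is_derive_scal.
    apply (edge_sum_derive n (fun a b => pdot a (rot q (psub b a)))); [exact Hn | exact Hk | |].
    + replace (edge_vec n P k) with (psub (pidx n P (k + 1)) (P k))
        by (unfold edge_vec, pidx; rewrite (Nat.mod_small k) by exact Hk; reflexivity).
      apply is_derive_area_start.
    + apply is_derive_area_end.
  - unfold edge_vec. rewrite pidx_prev_succ by exact Hk.
    replace (P k) with (pidx n P k) by (unfold pidx; rewrite Nat.mod_small by exact Hk; reflexivity).
    destruct (pidx n P k) as [x1 x2], (pidx n P (k + 1)) as [y1 y2],
             (pidx n P (prev n k)) as [z1 z2], v as [v1 v2].
    unfold q, psub, padd, pscale. rewrite !rot_quarter by exact Hs.
    unfold pdot; cbn [fst snd]. field.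
Qed.

Definition balance (sigma e a b : R) (u w : pt) : pt :=
  padd (psub u w) (pscale e (rot (sigma * (PI / 2)) (padd (pscale a u) (pscale b w)))).

Lemma gradient_balance sigma n P k kappa :
  sigma = 1 \/ sigma = -1 -> closed_curve n P -> (k < n)%nat ->
  padd (grad_at (Length n) P k) (pscale kappa (grad_at (Vol sigma n) P k))
  = balance sigma (kappa / 2) (edge_len n P (prev n k)) (edge_len n P k)
      (tangent n P (prev n k)) (tangent n P k).
Proof.
  intros Hs Hc Hk. assert (Hn : (2 <= n)%nat) by (destruct Hc; lia).
  pose proof (edge_len_pos n P k Hc Hk) as Hlk.
  pose proof (edge_len_pos n P (prev n k) Hc (prev_lt n k ltac:(lia))) as Hlp.
  rewrite grad_Length, grad_Vol by assumption.
  rewrite (edge_vec_tangent n P k), (edge_vec_tangent n P (prev n k)) by lra.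
  unfold balance.
  destruct (tangent n P k) as [w1 w2], (tangent n P (prev n k)) as [u1 u2].
  unfold psub, padd, pscale. rewrite !rot_quarter by exact Hs. cbn [fst snd].
  f_equal; field.
Qed.

Lemma balance_same_length sigma e l u w :
  balance sigma e l l u w = balance sigma (e * l) 1 1 u w.
Proof.
  unfold balance. destruct u as [u1 u2], w as [w1 w2].
  unfold psub, padd, pscale; cbn [fst snd]. unfold rot; cbn [fst snd].
  f_equal; ring.
Qed.

(* Between unit vectors, the balance forces the two adjacent edges to have
   equal length: pairing with u + w gives e (a - b) [u, w] = 0, and [u, w] = 0
   would force w = u and then e (a + b) J u = 0. *)
Lemma balance_equal_edges sigma e a b u w :
  sigma = 1 \/ sigma = -1 -> pdot u u = 1 -> pdot w w = 1 ->
  0 < a -> 0 < b -> e <> 0 ->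
  balance sigma e a b u w = (0, 0) -> a = b.
Proof.
  intros Hs Hu Hw Ha Hb He Hbal.
  destruct u as [u1 u2], w as [w1 w2]. unfold pdot in Hu, Hw; cbn [fst snd] in Hu, Hw.
  unfold balance, psub, padd, pscale in Hbal. rewrite rot_quarter in Hbal by exact Hs.
  cbn [fst snd] in Hbal. injection Hbal as X1 X2.
  set (f := e * sigma).
  assert (Hf : f <> 0) by (unfold f; destruct Hs as [-> | ->]; lra).
  replace (e * (- sigma * (a * u2 + b * w2))) with (- f * (a * u2 + b * w2)) in X1
    by (unfold f; ring).
  replace (e * (sigma * (a * u1 + b * w1))) with (f * (a * u1 + b * w1)) in X2
    by (unfold f; ring).
  clearbody f. clear Hs He.
  destruct (Req_dec a b) as [|Hab]; [assumption|exfalso].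
  assert (Hcross : f * ((a - b) * (u1 * w2 - u2 * w1)) = 0).
  { transitivity ((u1 + w1) * (u1 - w1 + - f * (a * u2 + b * w2))
                  + (u2 + w2) * (u2 - w2 + f * (a * u1 + b * w1))
                  - (u1 * u1 + u2 * u2) + (w1 * w1 + w2 * w2)); [ring|].
    rewrite X1, X2, Hu, Hw. ring. }
  assert (Hpar : u1 * w2 - u2 * w1 = 0).
  { apply Rmult_integral in Hcross as [|Hcross]; [contradiction|].
    apply Rmult_integral in Hcross as [|]; [lra | assumption]. }
  assert (Hdot : u1 * w1 + u2 * w2 = 1).
  { transitivity (u1 * u1 + u2 * u2 - u1 * (u1 - w1 + - f * (a * u2 + b * w2))
                  - u2 * (u2 - w2 + f * (a * u1 + b * w1)) - f * b * (u1 * w2 - u2 * w1));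
      [ring|].
    rewrite X1, X2, Hpar, Hu. ring. }
  assert (Hsq : (u1 - w1) ^ 2 + (u2 - w2) ^ 2 = 0).
  { transitivity ((u1 * u1 + u2 * u2) + (w1 * w1 + w2 * w2) - 2 * (u1 * w1 + u2 * w2));
      [ring|].
    rewrite Hu, Hw, Hdot. ring. }
  pose proof (pow2_ge_0 (u1 - w1)). pose proof (pow2_ge_0 (u2 - w2)).
  assert (Eu1 : u1 - w1 = 0) by (apply Rsqr_0_uniq; rewrite Rsqr_pow2; lra).
  assert (Eu2 : u2 - w2 = 0) by (apply Rsqr_0_uniq; rewrite Rsqr_pow2; lra).
  replace w1 with u1 in * by lra. replace w2 with u2 in * by lra.
  assert (Hab' : f * (a + b) <> 0) by (apply Rmult_integral_contrapositive; split; lra).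
  assert (u1 = 0) by (apply (Rmult_eq_reg_l (f * (a + b))); lra).
  assert (u2 = 0) by (apply (Rmult_eq_reg_l (f * (a + b))); lra).
  subst. lra.
Qed.

(* The rotation by theta solves u - w + tan(theta/2) J (u + w) = 0
   (cos and sin of theta are rational in tan(theta/2)). *)
Lemma balance_rotation sigma theta u :
  sigma = 1 \/ sigma = -1 -> - PI < theta < PI ->
  balance sigma (tan (theta / 2)) 1 1 u (rot (sigma * theta) u) = (0, 0).
Proof.
  intros Hs Hth. destruct u as [u1 u2].
  destruct (half_angle (theta / 2)) as [Hcos Hsin]; [lra|].
  replace (2 * (theta / 2)) with theta in Hcos, Hsin by field.
  set (t := tan (theta / 2)) in *.
  assert (Ht : 1 + t ^ 2 <> 0) by nra.
  unfold balance. rewrite rot_oriented by exact Hs.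
  unfold psub, padd, pscale; cbn [fst snd]. rewrite rot_quarter by exact Hs.
  cbn [fst snd]. rewrite Hcos, Hsin. destruct Hs as [-> | ->]; f_equal; field; exact Ht.
Qed.

(* J - 1 is invertible, so the balance determines w from u. *)
Lemma balance_unique sigma e u w w' :
  sigma = 1 \/ sigma = -1 ->
  balance sigma e 1 1 u w = (0, 0) -> balance sigma e 1 1 u w' = (0, 0) -> w = w'.
Proof.
  intros Hs H H'. destruct u as [u1 u2], w as [w1 w2], w' as [v1 v2].
  unfold balance, psub, padd, pscale in H, H'. rewrite rot_quarter in H, H' by exact Hs.
  cbn [fst snd] in H, H'. injection H as X1 X2. injection H' as Y1 Y2.
  assert (A1 : w1 - v1 = - (e * sigma) * (w2 - v2)) by nra.
  assert (A2 : w2 - v2 = (e * sigma) * (w1 - v1)) by nra.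
  set (f := e * sigma) in *.
  assert (Hd1 : (w1 - v1) * (1 + f ^ 2) = 0).
  { transitivity (w1 - v1 + f * (f * (w1 - v1))); [ring|].
    rewrite <- A2, A1. ring. }
  assert (Hd2 : (w2 - v2) * (1 + f ^ 2) = 0).
  { transitivity (w2 - v2 - f * (- f * (w2 - v2))); [ring|].
    rewrite <- A1, A2. ring. }
  assert (Hpos : 1 + f ^ 2 <> 0) by nra.
  apply Rmult_integral in Hd1 as [|]; [|contradiction].
  apply Rmult_integral in Hd2 as [|]; [|contradiction].
  f_equal; lra.
Qed.

Lemma balance_cayley sigma theta u w :
  sigma = 1 \/ sigma = -1 -> - PI < theta < PI ->
  balance sigma (tan (theta / 2)) 1 1 u w = (0, 0) <-> w = rot (sigma * theta) u.
Proof.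
  intros Hs Hth. split.
  - intros H. apply (balance_unique sigma (tan (theta / 2)) u); [exact Hs | exact H |].
    apply balance_rotation; assumption.
  - intros ->. apply balance_rotation; assumption.
Qed.

(* nu_k = R_{sigma theta} nu_{k-1} is the same as T_k = R_{sigma theta} T_{k-1},
   since nu = J T and rotations commute. *)
Lemma signed_angle_tangent sigma n P k theta : (k < n)%nat ->
  is_signed_angle sigma n P k theta
  <-> - PI < theta <= PI /\ tangent n P k = rot (sigma * theta) (tangent n P (prev n k)).
Proof.
  intros Hk. unfold is_signed_angle. rewrite (Nat.mod_small k) by exact Hk.
  change (normal sigma n P ?j) with (rot (sigma * (PI / 2)) (tangent n P j)).
  change ((k + n - 1) mod n)%nat with (prev n k).
  rewrite rot_rot, Rplus_comm, <- rot_rot.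
  split; intros [Hb E]; split; try exact Hb.
  - exact (rot_inj _ _ _ E).
  - rewrite E. reflexivity.
Qed.

Lemma equilibrium_equal_edges sigma n P kappa :
  sigma = 1 \/ sigma = -1 -> closed_curve n P -> kappa <> 0 ->
  (forall k, (k < n)%nat ->
     padd (grad_at (Length n) P k) (pscale kappa (grad_at (Vol sigma n) P k)) = (0, 0)) ->
  forall j, (j < n)%nat -> edge_len n P j = edge_len n P 0.
Proof.
  intros Hs Hc Hkappa Heq.
  assert (Hn : (0 < n)%nat) by (destruct Hc; lia).
  assert (Hprev : forall k, (k < n)%nat -> edge_len n P (prev n k) = edge_len n P k).
  { intros k Hk. pose proof (prev_lt n k Hn).
    apply (balance_equal_edges sigma (kappa / 2) _ _
             (tangent n P (prev n k)) (tangent n P k) Hs);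
      auto using tangent_unit, edge_len_pos; [lra|].
    rewrite <- gradient_balance by assumption. exact (Heq k Hk). }
  induction j as [|j IH]; intros Hj; [reflexivity|].
  rewrite <- (Hprev (S j) Hj), prev_S by exact Hj. apply IH. lia.
Qed.

Lemma vertex_equilibrium_iff sigma n P k kappa l theta :
  sigma = 1 \/ sigma = -1 -> closed_curve n P -> (k < n)%nat ->
  edge_len n P (prev n k) = l -> edge_len n P k = l ->
  - PI < theta < PI -> tan (theta / 2) = kappa * l / 2 ->
  padd (grad_at (Length n) P k) (pscale kappa (grad_at (Vol sigma n) P k)) = (0, 0)
  <-> tangent n P k = rot (sigma * theta) (tangent n P (prev n k)).
Proof.
  intros Hs Hc Hk Hlp Hlk Htheta Htan.
  rewrite gradient_balance, Hlp, Hlk, balance_same_length by assumption.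
  replace (kappa / 2 * l) with (tan (theta / 2)) by lra.
  apply balance_cayley; assumption.
Qed.

Theorem mainTheorem4 (sigma : R) (n : nat) (P : nat -> pt) (kappa : R) :
  (sigma = 1 \/ sigma = -1) ->
  closed_curve n P ->
  kappa <> 0 ->
  ((forall k, (k < n)%nat ->
      padd (grad_at (Length n) P k) (pscale kappa (grad_at (Vol sigma n) P k))
      = (0, 0))
   <->
   (exists l0 theta0,
      0 < l0 /\ - PI < theta0 < PI /\
      (forall k, (k < n)%nat ->
         edge_len n P k = l0 /\ is_signed_angle sigma n P k theta0) /\
      kappa * l0 = 2 * tan (theta0 / 2))).
Proof.
  intros Hs Hc Hkappa. assert (Hn : (0 < n)%nat) by (destruct Hc; lia).
  split.
  - intros Heq. pose proof (equilibrium_equal_edges sigma n P kappa Hs Hc Hkappa Heq) as Hl.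
    set (l0 := edge_len n P 0) in *.
    set (theta := 2 * atan (kappa * l0 / 2)).
    assert (Htheta : - PI < theta < PI)
      by (pose proof (atan_bound (kappa * l0 / 2)); unfold theta; lra).
    assert (Htan : tan (theta / 2) = kappa * l0 / 2)
      by (unfold theta; replace (2 * atan _ / 2) with (atan (kappa * l0 / 2)) by field;
          apply tan_atan).
    exists l0, theta. split; [exact (edge_len_pos n P 0 Hc Hn)|].
    split; [exact Htheta|]. split; [|lra].
    intros k Hk. split; [exact (Hl k Hk)|].
    apply signed_angle_tangent; [exact Hk | split; [lra|]].
    apply (vertex_equilibrium_iff sigma n P k kappa l0 theta); auto using prev_lt.
  - intros (l0 & theta & _ & Htheta & Hall & Htan) k Hk.
    destruct (Hall k Hk) as [Hlk Hangle].
    apply signed_angle_tangent in Hangle as [_ Hturn]; [|exact Hk].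
    apply (vertex_equilibrium_iff sigma n P k kappa l0 theta); auto; [|lra].
    apply Hall, prev_lt, Hn.
Qed.
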